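(* Let $n\ge 1$, $\pi\in S_n$ and $1\le i\le n+1$. If one deletes the entry $1$ from $s_{1\dot{2}}(\mathrm{ins}_i(\pi))$ and then subtracts $1$ from every remaining entry, the result is exactly $s_{1\dot{2}}(\pi)$. Equivalently, the entries $2,3,\dots,n+1$ appear in $s_{1\dot{2}}(\mathrm{ins}_i(\pi))$ in the same relative order as the entries $1,2,\dots,n$ appear in $s_{1\dot{2}}(\pi)$, with $x$ corresponding to $x-1$.
   Context: The $1\dot{2}$-avoiding stack-sorting map $s_{1\dot{2}}$ is defined as follows. Start with the input $\pi$ and an empty stack. Repeat the following step until both the input and the stack are empty: - If input remains, and either the stack is empty or the next input entry is smaller than the entry at the bottom of the stack, push the next input entry onto the top of the stack. - Otherwise, pop the top entry of the stack and append it to the output. The output word is $s_{1\dot{2}}(\pi)$. For $\pi\in S_n$, $\mathrm{inc}(\pi)$ is the word obtained by adding $1$ to every entry of $\pi$. For $1\le i\le n+1$, $\mathrm{ins}_i(\pi)\in S_{n+1}$ is the permutation obtained from $\mathrm{inc}(\pi)$ by inserting the entry $1$ so that it occupies position $i$. *)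

From mathcomp Require Import all_boot.
Set Implicit Arguments. Unset Strict Implicit. Unset Printing Implicit Defensive.

(* Words/permutations are sequences of naturals; pi in S_n is a seq nat that
   is a permutation of [:: 1; ...; n].
   The stack is a seq whose head is the TOP and whose last element is the
   BOTTOM. One fuel unit per step (push or pop). *)
Fixpoint s12_aux (fuel : nat) (inp stk : seq nat) : seq nat :=
  match fuel with
  | 0 => [::]
  | f.+1 =>
    match inp, stk with
    | [::], [::] => [::]
    | x :: inp', [::] => s12_aux f inp' [:: x]
    | x :: inp', y :: stk' =>
        if x < last y stk' then s12_aux f inp' (x :: stk)
        else y :: s12_aux f inp stk'
    | [::], y :: stk' => y :: s12_aux f [::] stk'
    end
  end.

(* Each entry is pushed once and popped once: 2 * size steps suffice. *)
Definition s12 (pi : seq nat) : seq nat := s12_aux (2 * size pi) pi [::].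

Definition inc (pi : seq nat) : seq nat := map S pi.

Definition ins (i : nat) (pi : seq nat) : seq nat :=
  take i.-1 (inc pi) ++ 1 :: drop i.-1 (inc pi).

(* Comparisons in the machine are only ever made against the bottom of the
   stack, and a minimal entry that reaches the bottom blocks every push and is
   popped at once.  Hence deleting a minimal entry from the input deletes it
   from the output, and relabelling the entries by an increasing map relabels
   the output.  Deleting 1 from [ins i pi] gives [inc pi], and [predn] is
   increasing on positive entries, which undoes [inc]. *)

From mathcomp Require Import all_boot.
From mathcomp Require Import zify.

Set Implicit Arguments.
Unset Strict Implicit.
Unset Printing Implicit Defensive.

(* Every entry of [I] is pushed and popped and every entry of [S] is popped,
   so this fuel is enough (see [s12_aux_fuel]). *)
Definition s12_run (I S : seq nat) : seq nat :=
  s12_aux (2 * size I + size S) I S.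

Lemma s12_aux_fuel f f' I S :
  2 * size I + size S <= f <= f' -> s12_aux f I S = s12_aux f' I S.
Proof.
elim: f f' I S => [|f IH] [|f'] [|x I] [|y s] //=; try lia.
- by move=> le_f; rewrite (IH f') //; lia.
- by move=> le_f; rewrite (IH f') //=; lia.
- by move=> le_f; case: ifP => _; rewrite (IH f') //=; lia.
Qed.

Lemma s12E p : s12 p = s12_run p [::].
Proof. by rewrite /s12 /s12_run addn0. Qed.

Lemma s12_run_nil S : s12_run [::] S = S.
Proof.
elim: S => [|y s IHs] //; rewrite /s12_run /= in IHs *.
by rewrite muln0 add0n in IHs; rewrite IHs.
Qed.

Lemma s12_run_push x I : s12_run (x :: I) [::] = s12_run I [:: x].
Proof.
by rewrite /s12_run (_ : _ + _ = (2 * size I + size [:: x]).+1) //=; lia.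
Qed.

Lemma s12_run_step x I y s :
  s12_run (x :: I) (y :: s) =
  if x < last y s then s12_run I [:: x, y & s] else y :: s12_run (x :: I) s.
Proof.
rewrite /s12_run (_ : _ + _ = (2 * size (x :: I) + size s).+1); last by rewrite /=; lia.
by cbn [s12_aux]; case: ifP => // _; apply: s12_aux_fuel; rewrite /=; lia.
Qed.

Lemma s12_run_push_above x I S :
  S != [::] -> x < last x S -> s12_run (x :: I) S = s12_run I (x :: S).
Proof. by case: S => // y s _ /= lt_x_bottom; rewrite s12_run_step lt_x_bottom. Qed.

Lemma last_filter (T : Type) (a : pred T) x s :
  a (last x s) -> last x (filter a s) = last x s.
Proof.
by elim/last_ind: s => //= s y _; rewrite last_rcons filter_rcons => ->; rewrite last_rcons.
Qed.

Lemma map_s12_run (D : pred nat) (g : nat -> nat) I S :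
  {in D &, {mono g : x y / x < y}} -> all D I -> all D S ->
  map g (s12_run I S) = s12_run (map g I) (map g S).
Proof.
move=> mono_g; elim: I S => [|x I IHI] S DI DS; first by rewrite !s12_run_nil.
move: DI => /andP[Dx DI]; rewrite map_cons.
elim: S DS => [|y s IHS] DS.
  by rewrite !s12_run_push IHI //= Dx.
have Db : D (last y s) by apply: (allP DS); apply: mem_last.
move: DS => /andP[Dy Ds]; rewrite map_cons !s12_run_step last_map mono_g //.
case: ifP => _; last by rewrite map_cons IHS.
by rewrite IHI //= Dx Dy.
Qed.

(* The last hypothesis is the invariant that [m] is never buried under another
   entry at the bottom of the stack. *)
Lemma filter_s12_run m I S :
  all (leq m) I -> all (leq m) S -> (last m S = m -> size S <= 1) ->
  [seq z <- s12_run I S | z != m] =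
  s12_run [seq z <- I | z != m] [seq z <- S | z != m].
Proof.
elim: I S => [|x I IHI] S mI mS bottomS; first by rewrite !s12_run_nil.
move: mI => /andP[mx mI].
elim: S mS bottomS => [|y s IHS] mS bottomS.
  rewrite s12_run_push IHI //=; last by rewrite andbT.
  by case: ifP => // _; rewrite s12_run_push.
have mb : m <= last y s by apply: (allP mS); apply: mem_last.
move: mS => /andP[my ms]; rewrite s12_run_step.
have [bm | bm] := eqVneq (last y s) m.
  have s_nil : s = [::] by case: s bottomS bm {IHS mb ms} => // z t /[apply].
  subst s; move: bm => /= ym; subst y.
  by rewrite ltnNge mx /= eqxx IHS.
have lt_mb : m < last y s by rewrite ltn_neqAle eq_sym bm mb.
have bottom_filtered z : last z [seq u <- y :: s | u != m] = last y s.
  by rewrite last_filter.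
case: ltnP => [xb | bx].
  have nonnil_filtered : [seq u <- y :: s | u != m] != [::].
    have : last y s \in [seq u <- y :: s | u != m] by rewrite mem_filter bm mem_last.
    by case: (filter _ _).
  rewrite IHI //=; last 2 first.
  - by rewrite mx my.
  - by move/eqP; rewrite (negbTE bm).
  case: (eqVneq x m) => [-> | xm] //=.
  by rewrite s12_run_push_above // bottom_filtered.
have xm : x != m by rewrite neq_ltn (leq_trans lt_mb bx) orbT.
have bottom_s : last m s = m -> size s <= 1.
  by case: s bm {IHS bottomS bottom_filtered mb ms lt_mb bx} => // z t /negP bm /eqP /bm.
case: (eqVneq y m) => [ym | ym]; first by subst y; rewrite /= eqxx IHS.
rewrite /= ym IHS // /= xm s12_run_step last_filter //.
by rewrite ltnNge bx.
Qed.

Lemma s12_filter_min m p :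
  all (leq m) p -> s12 [seq z <- p | z != m] = [seq z <- s12 p | z != m].
Proof. by move=> mp; rewrite !s12E filter_s12_run. Qed.

Lemma s12_map_mono (D : pred nat) (g : nat -> nat) p :
  {in D &, {mono g : x y / x < y}} -> all D p -> s12 (map g p) = map g (s12 p).
Proof. by move=> mono_g Dp; rewrite !s12E (map_s12_run mono_g Dp). Qed.

Lemma predn_mono_pos : {in [pred x | 0 < x] &, {mono predn : x y / x < y}}.
Proof. by move=> [|x] [|y]. Qed.

Lemma ins_pos i pi : all (leq 1) (ins i pi).
Proof.
apply/allP => x; rewrite /ins mem_cat inE => /orP[/mem_take | /orP[/eqP-> // | /mem_drop]];
  by case/mapP => y _ ->.
Qed.

Lemma filter_ins i pi : 0 \notin pi -> [seq x <- ins i pi | x != 1] = inc pi.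
Proof.
move=> pi_pos; rewrite /ins filter_cat /= -filter_cat cat_take_drop.
by apply/all_filterP/allP => _ /mapP[x pi_x ->]; apply: contraNneq pi_pos => -[<-].
Qed.

Theorem lemma3p3 (n : nat) (pi : seq nat) (i : nat) :
  1 <= n -> perm_eq pi (iota 1 n) -> 1 <= i <= n.+1 ->
  map predn (filter (fun x => x != 1) (s12 (ins i pi))) = s12 pi.
Proof.
move=> _ pi_perm _.
have pi_pos : 0 \notin pi by rewrite (perm_mem pi_perm) mem_iota.
rewrite -s12_filter_min ?ins_pos // filter_ins //.
rewrite -(s12_map_mono predn_mono_pos); last by apply/allP => _ /mapP[x _ ->].
by rewrite /inc (mapK succnK).
Qed.
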